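(* Let $X$ be a real Banach space and let $x, y \in X$ be non-zero. Then the following are equivalent: (i) there exist $\lambda < 0$ and $r > 0$ such that the open ball $B(\lambda x, r) = \{ z \in X : \|\lambda x - z\| < r\}$ contains $y$ but does not contain the zero vector; (ii) $\rho'_{+}(x, y) < 0$.
   Context: For $x, y$ in a real normed space $X$, the norm derivatives are $\rho'_{+}(x,y) = \lim_{t \to 0^+} \|x\| \frac{\|x+ty\| - \|x\|}{t}$ and $\rho'_{-}(x,y) = \lim_{t \to 0^-} \|x\| \frac{\|x+ty\| - \|x\|}{t}$. Balls are open balls. *)

From HB Require Import structures.
From mathcomp Require Import all_boot all_order all_algebra.
From mathcomp Require Import all_classical all_reals all_analysis.
Set Implicit Arguments. Unset Strict Implicit. Unset Printing Implicit Defensive.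
Import Order.TTheory GRing.Theory Num.Theory.
Import numFieldNormedType.Exports.
Local Open Scope classical_set_scope.
Local Open Scope ring_scope.

(* Right norm derivative:
   rho'_+(x,y) = lim_{t -> 0+} ||x|| (||x + t y|| - ||x||) / t.
   (The limit always exists in a normed space by convexity of the norm.) *)
Definition rho_plus (R : realType) (X : normedModType R) (x y : X) : R :=
  lim ((fun t : R => `|x| * ((`|x + t *: y| - `|x|) / t)) @ 0^'+).

From HB Require Import structures.
From mathcomp Require Import all_boot all_order all_algebra.
From mathcomp Require Import all_classical all_reals all_analysis.
From mathcomp Require Import lra ring.
Import Order.TTheory GRing.Theory Num.Theory.
Import numFieldNormedType.Exports.
Local Open Scope classical_set_scope.
Local Open Scope ring_scope.

(* By convexity of the norm, the difference quotients t |-> (|x + t y| - |x|)/t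
   are nondecreasing on ]0, +oo[ and bounded below by -|y|, so rho'_+(x, y) is
   |x| times their infimum; hence it is negative iff |x + t y| < |x| for some
   t > 0.  On the other side, an open ball around c contains z but not 0 iff its
   radius lies in ]|c - z|, |c|], so such a ball exists iff |c - z| < |c|; for
   c = l x with l < 0, dividing by l turns this into |x + t y| < |x| with
   t = -1/l.  Neither completeness of the space nor y <> 0 plays a role. *)

Section NormDifferenceQuotient.
Variables (R : realType) (X : normedModType R).
Implicit Types (x y : X) (s t : R).

Definition rho_quotient x y t : R := `|x| * ((`|x + t *: y| - `|x|) / t).

Lemma normDZ_chord_le x y s t : 0 < s -> s <= t ->
  `|x + s *: y| - `|x| <= s / t * (`|x + t *: y| - `|x|).
Proof.
move=> s_gt0 le_st; have t_gt0 : 0 < t by apply: lt_le_trans le_st.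
set a := s / t.
have a_ge0 : 0 <= a by rewrite divr_ge0 // ltW.
have a_le1 : 0 <= 1 - a by rewrite subr_ge0 ler_pdivrMr // mul1r.
have -> : x + s *: y = (1 - a) *: x + a *: (x + t *: y).
  by rewrite scalerDr scalerA mulfVK ?gt_eqF // scalerBl scale1r addrA subrK.
have := ler_normD ((1 - a) *: x) (a *: (x + t *: y)).
by rewrite (normrZ (1 - a)) (normrZ a) (ger0_norm a_le1) (ger0_norm a_ge0) => ?; lra.
Qed.

Lemma rho_quotient_nondecreasing x y :
  {in `]0, +oo[ &, nondecreasing (rho_quotient x y)}.
Proof.
move=> s t; rewrite !in_itv /= !andbT => s_gt0 t_gt0 le_st.
rewrite /rho_quotient ler_wpM2l // ler_pdivrMr //.
rewrite (_ : _ / t * s = s / t * (`|x + t *: y| - `|x|)); last by ring.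
exact: normDZ_chord_le.
Qed.

Lemma rho_quotient_ge x y t : 0 < t -> - (`|x| * `|y|) <= rho_quotient x y t.
Proof.
move=> t_gt0; have := ler_normD (x + t *: y) (- (t *: y)).
rewrite addrK normrN normrZ gtr0_norm // => tri.
have : - `|y| <= (`|x + t *: y| - `|x|) / t by rewrite ler_pdivlMr //; lra.
by rewrite /rho_quotient; have := normr_ge0 x; nra.
Qed.

Lemma rho_quotient_lt0 x y t : x != 0 -> 0 < t ->
  (rho_quotient x y t < 0) = (`|x + t *: y| < `|x|).
Proof.
move=> x_neq0 t_gt0.
rewrite /rho_quotient pmulr_rlt0 ?normr_gt0 // pmulr_llt0 ?invr_gt0 //.
by rewrite subr_lt0.
Qed.

Let quotients x y := rho_quotient x y @` [set` `]0, +oo[%R].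

Lemma quotients_lbound x y : has_lbound (quotients x y).
Proof.
exists (- (`|x| * `|y|)) => z [t]; rewrite /= in_itv /= andbT => t_gt0 <-.
exact: rho_quotient_ge.
Qed.

Lemma rho_plus_inf x y : rho_plus x y = inf (quotients x y).
Proof.
apply: cvg_lim => //.
apply: (@nondecreasing_at_right_cvgr _ _ 0 (BInfty _ false)) => //.
  exact: rho_quotient_nondecreasing.
exact: quotients_lbound.
Qed.

Lemma rho_plus_lt0P x y : x != 0 ->
  rho_plus x y < 0 <-> exists2 t, 0 < t & `|x + t *: y| < `|x|.
Proof.
move=> x_neq0; rewrite rho_plus_inf; split.
  have quotients_neq0 : quotients x y !=set0.
    by exists (rho_quotient x y 1), 1; rewrite //= in_itv /= andbT.
  move=> /(inf_lt quotients_neq0)[_ [t + <-]]; rewrite /= in_itv /= andbT.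
  by move=> t_gt0; rewrite rho_quotient_lt0 // => ?; exists t.
move=> [t t_gt0]; rewrite -(rho_quotient_lt0 _ _ _ x_neq0 t_gt0).
apply: le_lt_trans; apply: ge_inf; first exact: quotients_lbound.
by exists t; rewrite //= in_itv /= andbT.
Qed.

End NormDifferenceQuotient.

Section BallsAvoidingZero.
Variables (R : realType) (X : normedModType R).

Lemma ball_avoiding0P (c z : X) :
  (exists2 r : R, 0 < r & ball c r z /\ ~ ball c r 0) <-> `|c - z| < `|c|.
Proof.
split.
  move=> [r _ []]; rewrite -ball_normE /ball_ /= subr0 => lt_zr /negP.
  by rewrite -leNgt; apply: lt_le_trans.
move=> lt_zc; exists `|c|; first exact: le_lt_trans lt_zc.
by rewrite -ball_normE /ball_ /= subr0 ltxx.
Qed.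

Lemma distZ_lt_normZ (l : R) (x y : X) : l != 0 ->
  (`|l *: x - y| < `|l *: x|) = (`|x + (- l^-1) *: y| < `|x|).
Proof.
move=> l_neq0; have l_gt0 : 0 < `|l| by rewrite normr_gt0.
have -> : l *: x - y = l *: (x + (- l^-1) *: y).
  by rewrite scalerDr scalerA mulrN mulfV // scaleN1r.
by rewrite !normrZ ltr_pM2l.
Qed.

End BallsAvoidingZero.

Theorem mainTheorem2 (R : realType) (X : completeNormedModType R) (x y : X) :
  x != 0 -> y != 0 ->
  ((exists (lambda r : R), lambda < 0 /\ 0 < r /\
      ball (lambda *: x) r y /\ ~ ball (lambda *: x) r 0)
   <-> rho_plus x y < 0).
Proof.
move=> x_neq0 _; split.
  move=> [l [r [l_lt0 [r_gt0 ball_y0]]]]; apply/rho_plus_lt0P => //.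
  have /ball_avoiding0P : exists2 r, 0 < r & ball (l *: x) r y /\ ~ ball (l *: x) r 0.
    by exists r.
  rewrite distZ_lt_normZ ?ltr0_neq0 // => lt_xy.
  by exists (- l^-1); rewrite // oppr_gt0 invr_lt0.
move=> /rho_plus_lt0P-/(_ x_neq0)[t t_gt0 lt_xy]; exists (- t^-1).
have l_lt0 : - t^-1 < 0 by rewrite oppr_lt0 invr_gt0.
have /ball_avoiding0P [r r_gt0 ball_y0] : `|- t^-1 *: x - y| < `|- t^-1 *: x|.
  by rewrite distZ_lt_normZ ?ltr0_neq0 // invrN opprK invrK.
by exists r.
Qed.
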